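(* Let $\alpha>0$, let $\mathscr{K}$ be a convex feasible functional, and consider the augmented dual ascent scheme $$x^{n+1} = \operatorname{arg\,min}_{x} \mathscr{K}(x)+\langle x,\Lambda^n\rangle +\frac{\alpha}{2}\|x\|^2,\qquad \Lambda^{n+1} = \Lambda^{n} + \alpha\mathcal{P}_{\mathcal{M}^\perp}(x^{n+1}),\qquad \Lambda^0=0.$$ Define $\mathscr{J}(x)=\mathscr{K}(x)+\frac{\alpha}{2}\|\mathcal{P}_{\mathcal{M}}x\|^2$ and $h(\Lambda)=\min_x \mathscr{J}(x)+\langle x,\mathcal{P}_{\mathcal{M}^\perp}\Lambda\rangle$. Suppose that $(\Lambda^{n})_{n=1}^\infty$ is bounded. Then the set of maximizers of $h$ is non-empty and $(\Lambda^{n})_{n=1}^\infty$ is Fej\'{e}r monotone with respect to it. Moreover, if $c$ is the supremum of $h$ then $c-h(\Lambda^n)=o(1/n)$.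
   Context: $\mathcal{H}$ is a finite dimensional Hilbert space, $\mathcal{M}\subset\mathcal{H}$ a linear subspace, $\mathcal{P}_{\mathcal{M}}$, $\mathcal{P}_{\mathcal{M}^\perp}$ the orthogonal projections onto $\mathcal{M}$, $\mathcal{M}^\perp$. A functional is called feasible if it is lower semi-continuous, proper, bounded below, and satisfies $\lim_{\|x\|\rightarrow\infty}\mathscr{K}(x)/\|x\|=\infty$. *)

From HB Require Import structures.
From mathcomp Require Import all_boot all_order all_algebra.
From mathcomp Require Import all_classical all_reals all_analysis.
Set Implicit Arguments. Unset Strict Implicit. Unset Printing Implicit Defensive.
Import Order.TTheory GRing.Theory Num.Theory.
Import numFieldTopology.Exports numFieldNormedType.Exports.
Local Open Scope ring_scope.
Local Open Scope classical_set_scope.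

(* The finite-dimensional Hilbert space H is modelled as R^n = 'rV[R]_n
   with the Euclidean inner product. *)
Section Defs.
Variables (R : realType) (n : nat).
Implicit Types (x y : 'rV[R]_n).

Definition dotp x y : R := (x *m y^T) 0 0.
Definition enorm x : R := Num.sqrt (dotp x x).

(* A linear subspace M of R^n is given as the row space of a square matrix
   M.  Its orthogonal complement is the row space of kermx M^T, i.e. the
   set of v with v *m M^T = 0 (v orthogonal to every row of M). *)
Definition orth_compl (M : 'M[R]_n) : 'M[R]_n := kermx M^T.

Definition projM (M : 'M[R]_n) x : 'rV[R]_n := x *m proj_mx M (orth_compl M).
Definition projMperp (M : 'M[R]_n) x : 'rV[R]_n :=
  x *m proj_mx (orth_compl M) M.

Local Open Scope ereal_scope.

Definition proper_fun (K : 'rV[R]_n -> \bar R) :=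
  (exists x, K x < +oo) /\ (forall x, -oo < K x).

Definition bounded_below_fun (K : 'rV[R]_n -> \bar R) :=
  exists m : R, forall x, m%:E <= K x.

Definition supercoercive (K : 'rV[R]_n -> \bar R) :=
  forall A : R, exists r : R, forall x, (r < enorm x)%R ->
    (A * enorm x)%:E <= K x.

Definition feasible (K : 'rV[R]_n -> \bar R) :=
  lower_semicontinuous K /\ proper_fun K /\ bounded_below_fun K /\
  supercoercive K.

Definition convex_fun (K : 'rV[R]_n -> \bar R) :=
  forall x y (t : R), (0 <= t <= 1)%R ->
    K (t *: x + (1 - t) *: y)%R <= t%:E * K x + (1 - t)%:E * K y.

End Defs.

From HB Require Import structures.
From mathcomp Require Import all_boot all_order all_algebra.
From mathcomp Require Import all_classical all_reals all_analysis.
From mathcomp Require Import ring lra zify.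
Import Order.TTheory GRing.Theory Num.Theory.
Import numFieldTopology.Exports numFieldNormedType.Exports.
Set Implicit Arguments. Unset Strict Implicit. Unset Printing Implicit Defensive.
Local Open Scope ring_scope.
Local Open Scope classical_set_scope.

(* The first-order optimality condition of the proximal step shows that
   x^{n+1} also minimizes J(y) + <y, Lam^{n+1}>.  Hence h(Lam^{n+1}) is attained
   at x^{n+1}, and Lam^{n+1} - Lam^n = alpha P x^{n+1} is a supergradient of the
   concave function h at Lam^{n+1}: the scheme is a proximal point method for
   maximizing h.  The proximal point estimate
     |Lam^{n+1} - L|^2 + 2 alpha (h L - h Lam^{n+1}) <= |Lam^n - L|^2   (L in M^perp)
   gives Fejer monotonicity towards maximizers and, summed, the bound
   h L - h Lam^n <= |L|^2 / (2 alpha n); so any cluster point of the bounded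
   sequence (Lam^n) maximizes h, h being upper semicontinuous.  The gaps
   c - h Lam^n are nonincreasing with a finite sum, hence o(1/n). *)

Section DotProduct.
Variables (R : realType) (d : nat).
Implicit Types (x y z : 'rV[R]_d).

Lemma dotpE x y : dotp x y = \sum_j x 0 j * y 0 j.
Proof. by rewrite /dotp mxE; apply: eq_bigr => j _; rewrite mxE. Qed.

Lemma dotpC x y : dotp x y = dotp y x.
Proof. by rewrite !dotpE; apply: eq_bigr => j _; rewrite mulrC. Qed.

Lemma dotpDl x y z : dotp (x + y) z = dotp x z + dotp y z.
Proof. by rewrite !dotpE -big_split; apply: eq_bigr => j _; rewrite mxE mulrDl. Qed.

Lemma dotpZl (a : R) x y : dotp (a *: x) y = a * dotp x y.
Proof. by rewrite !dotpE mulr_sumr; apply: eq_bigr => j _; rewrite mxE mulrA. Qed.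

Lemma dotpNl x y : dotp (- x) y = - dotp x y.
Proof. by rewrite -scaleN1r dotpZl mulN1r. Qed.

Lemma dotpBl x y z : dotp (x - y) z = dotp x z - dotp y z.
Proof. by rewrite dotpDl dotpNl. Qed.

Lemma dotpDr x y z : dotp x (y + z) = dotp x y + dotp x z.
Proof. by rewrite dotpC dotpDl !(dotpC x). Qed.

Lemma dotpZr (a : R) x y : dotp x (a *: y) = a * dotp x y.
Proof. by rewrite dotpC dotpZl dotpC. Qed.

Lemma dotpNr x y : dotp x (- y) = - dotp x y.
Proof. by rewrite dotpC dotpNl dotpC. Qed.

Lemma dotpBr x y z : dotp x (y - z) = dotp x y - dotp x z.
Proof. by rewrite dotpDr dotpNr. Qed.

Lemma dotp_ge0 x : 0 <= dotp x x.
Proof. by rewrite dotpE; apply: sumr_ge0 => j _; rewrite -expr2 sqr_ge0. Qed.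

Lemma dotp_eq0 x : (dotp x x == 0) = (x == 0).
Proof.
apply/idP/eqP => [|->]; last by rewrite dotpE big1 // => j _; rewrite mxE mul0r.
rewrite dotpE psumr_eq0 => [/allP x0|j _]; last by rewrite -expr2 sqr_ge0.
apply/rowP => j; rewrite mxE.
by have /(_ (mem_index_enum j)) := x0 j; rewrite mulf_eq0 orbb => /eqP.
Qed.

Lemma enorm_sq x : enorm x ^+ 2 = dotp x x.
Proof. by rewrite /enorm sqr_sqrtr // dotp_ge0. Qed.

Lemma ler_enorm x y : (enorm x <= enorm y) = (dotp x x <= dotp y y).
Proof. by rewrite /enorm ler_sqrt // dotp_ge0. Qed.

Lemma coord_le_enorm (v : 'rV[R]_d) j : `|v 0 j| <= enorm v.
Proof.
rewrite /enorm -sqrtr_sqr ler_sqrt ?dotp_ge0 // dotpE (bigD1 j) //= -expr2.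
by rewrite lerDl sumr_ge0 // => i _; rewrite -expr2 sqr_ge0.
Qed.

Lemma normr_le_enorm (v : 'rV[R]_d) : `|v| <= enorm v.
Proof.
have -> : `|v| = mx_norm v by [].
have [->|/mx_norm_neq0 [[i j] ->] /=] := eqVneq (mx_norm v) 0.
  by rewrite /enorm sqrtr_ge0.
by rewrite (ord1 i) coord_le_enorm.
Qed.

Lemma dotp_continuous (c : 'rV[R]_d) : continuous (dotp c).
Proof.
have -> : dotp c = fun v => \big[+%R/0]_(j <- index_enum 'I_d) (c 0 j * v 0 j).
  by apply: funext => v; rewrite dotpE.
apply: continuous_big => [|j _ v]; first exact: add_continuous.
by apply: continuous_comp; [exact: coord_continuous | exact: mulrl_continuous].
Qed.

End DotProduct.

Section OrthogonalProjection.
Variables (R : realType) (d : nat) (M : 'M[R]_d).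
Implicit Types (x y : 'rV[R]_d).
Local Notation Mperp := (orth_compl M).
Local Notation P := (projMperp M).
Local Notation Q := (projM M).

Lemma dotp_orth_compl u v : (u <= M)%MS -> (v <= Mperp)%MS -> dotp u v = 0.
Proof.
move=> /submxP[w ->] /sub_kermxP vM.
by rewrite /dotp -mulmxA -[M *m v^T]trmxK trmx_mul trmxK vM trmx0 mulmx0 mxE.
Qed.

Lemma capmx_orth_compl : (M :&: Mperp = 0)%MS.
Proof.
apply/eqP/rowV0P => v; rewrite sub_capmx => /andP[vM vMperp].
by apply/eqP; rewrite -dotp_eq0 dotp_orth_compl.
Qed.

Lemma capmx_orth_complC : (Mperp :&: M = 0)%MS.
Proof. by rewrite capmxC capmx_orth_compl. Qed.

Lemma addsmx_orth_compl_full x : (x <= M + Mperp)%MS.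
Proof.
apply: submx_full; rewrite /row_full.
have := mxrank_sum_cap M Mperp; rewrite capmx_orth_compl mxrank0 addn0 => ->.
by rewrite mxrank_ker mxrank_tr subnKC // rank_leq_col.
Qed.

Lemma projMperp_sub x : (P x <= Mperp)%MS. Proof. exact: proj_mx_sub. Qed.
Lemma projM_sub x : (Q x <= M)%MS. Proof. exact: proj_mx_sub. Qed.

Lemma add_projMperp_projM x : P x + Q x = x.
Proof.
by rewrite addrC add_proj_mx ?capmx_orth_compl ?addsmx_orth_compl_full.
Qed.

Lemma projMperp_id x : P (P x) = P x.
Proof. by rewrite {1}/projMperp proj_mx_id ?capmx_orth_complC ?projMperp_sub. Qed.

Lemma projMperpD x y : P (x + y) = P x + P y. Proof. exact: mulmxDl. Qed.
Lemma projMperpB x y : P (x - y) = P x - P y. Proof. exact: mulmxBl. Qed.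
Lemma projMperpZ (a : R) x : P (a *: x) = a *: P x. Proof. by rewrite /projMperp scalemxAl. Qed.
Lemma projMperp0 : P 0 = 0. Proof. exact: mul0mx. Qed.

Lemma dotp_projM_projMperp x y : dotp (Q x) (P y) = 0.
Proof. by rewrite dotp_orth_compl ?projM_sub ?projMperp_sub. Qed.

Lemma dotp_projMperp_projM x y : dotp (P x) (Q y) = 0.
Proof. by rewrite dotpC dotp_projM_projMperp. Qed.

Lemma dotp_projMperpr x y : dotp x (P y) = dotp (P x) (P y).
Proof. by rewrite -{1}(add_projMperp_projM x) dotpDl dotp_projM_projMperp addr0. Qed.

Lemma dotp_projMperp_sym x y : dotp x (P y) = dotp (P x) y.
Proof. by rewrite dotp_projMperpr dotpC -dotp_projMperpr dotpC. Qed.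

Lemma dotp_projMr x y : dotp x (Q y) = dotp (Q x) (Q y).
Proof. by rewrite -{1}(add_projMperp_projM x) dotpDl dotp_projMperp_projM add0r. Qed.

Lemma dotp_sub_projMperp v L : P v = v ->
  dotp (v - L) (v - L) = dotp (v - P L) (v - P L) + dotp (Q L) (Q L).
Proof.
move=> Pv; have -> : v - L = (v - P L) - Q L.
  by rewrite -{1}(add_projMperp_projM L) opprD addrA.
rewrite -Pv -projMperpB !(dotpBl, dotpBr) dotp_projMperp_projM dotp_projM_projMperp.
by rewrite subr0 sub0r opprK.
Qed.

End OrthogonalProjection.

Lemma ge0_linear_of_quadratic (R : realFieldType) (A B : R) : 0 <= B ->
  (forall t : R, 0 < t <= 1 -> 0 <= t * A + t ^+ 2 * B) -> 0 <= A.
Proof.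
move=> B0 small_t; rewrite leNgt; apply/negP => A0.
have BA0 : 0 < B - A by lra.
pose t := - A / (2 * (B - A)).
have t0 : 0 < t by rewrite divr_gt0 // ?oppr_gt0 // mulr_gt0.
have t1 : t <= 1 by rewrite ler_pdivrMr ?mulr_gt0 // mul1r; lra.
have := small_t t; rewrite t0 t1 => /(_ isT).
have -> : t * A + t ^+ 2 * B = t * (A * (B - 2 * A) / (2 * (B - A))).
  by rewrite /t; field; lra.
by rewrite pmulr_rge0 // pmulr_lge0 ?invr_gt0 ?mulr_gt0 // pmulr_lge0; lra.
Qed.

Section ProximalStep.
Variables (R : realType) (d : nat) (K : 'rV[R]_d -> \bar R) (alpha : R).
Hypotheses (alpha_ge0 : 0 <= alpha) (K_convex : convex_fun K).
Hypothesis K_gtNy : forall y, (-oo < K y)%E.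
Implicit Types (a x y : 'rV[R]_d).

(* Comparing x with the points x + t (y - x) of the segment, t -> 0+, turns
   the proximal minimality of x into the first-order condition. *)
Lemma prox_argmin_linearize a x (kx : R) : K x = kx%:E ->
  (forall y, K x + (dotp x a + alpha / 2 * enorm x ^+ 2)%:E
      <= K y + (dotp y a + alpha / 2 * enorm y ^+ 2)%:E)%E ->
  forall y, (K x + (dotp x (a + alpha *: x))%:E
      <= K y + (dotp y (a + alpha *: x))%:E)%E.
Proof.
move=> Kx x_argmin y.
case Ky: (K y) => [ky| |]; [| by rewrite leey | by have := K_gtNy y; rewrite Ky].
rewrite Kx -!EFinD lee_fin -subr_ge0.
have -> : ky + dotp y (a + alpha *: x) - (kx + dotp x (a + alpha *: x)) =
    ky - kx + (dotp (y - x) a + alpha * dotp x (y - x)).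
  by rewrite !dotpBl !dotpBr !dotpDr !dotpZr (dotpC y x); ring.
apply: (@ge0_linear_of_quadratic _ _ (alpha / 2 * dotp (y - x) (y - x))).
  by rewrite mulr_ge0 ?dotp_ge0 ?divr_ge0.
move=> t /andP[t0 t1]; pose z := x + t *: (y - x).
have Kz_le : (K z <= (t * ky + (1 - t) * kx)%:E)%E.
  have -> : z = t *: y + (1 - t) *: x.
    by rewrite /z scalerBr scalerBl scale1r addrCA addrC.
  by have := @K_convex y x t; rewrite (ltW t0) t1 Ky Kx -!EFinM -EFinD; apply.
have [kz Kz] : exists kz, K z = kz%:E.
  by move: Kz_le (K_gtNy z); case: (K z) => [kz| |] // _ _; exists kz.
have za : dotp z a = dotp x a + t * dotp (y - x) a by rewrite /z dotpDl dotpZl.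
have zz : dotp z z = dotp x x + 2 * t * dotp x (y - x) + t ^+ 2 * dotp (y - x) (y - x).
  rewrite /z; move: (y - x) => w.
  by rewrite !(dotpDl, dotpDr, dotpZl, dotpZr) (dotpC w x); ring.
have := x_argmin z; rewrite Kz Kx -!EFinD lee_fin !enorm_sq za zz.
move: Kz_le; rewrite Kz lee_fin.
nra.
Qed.

(* Splitting a + alpha x = (a + alpha P x) + alpha Q x, the M-component of the
   linear term is absorbed by the quadratic penalty via 2 <Qy,Qx> <= |Qy|^2 + |Qx|^2. *)
Lemma prox_argmin_augmented (M : 'M[R]_d) a x (kx : R) : K x = kx%:E ->
  (forall y, K x + (dotp x a + alpha / 2 * enorm x ^+ 2)%:E
      <= K y + (dotp y a + alpha / 2 * enorm y ^+ 2)%:E)%E ->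
  forall y, (K x + (alpha / 2 * enorm (projM M x) ^+ 2)%:E
                 + (dotp x (a + alpha *: projMperp M x))%:E
      <= K y + (alpha / 2 * enorm (projM M y) ^+ 2)%:E
                 + (dotp y (a + alpha *: projMperp M x))%:E)%E.
Proof.
move=> Kx x_argmin y; have := prox_argmin_linearize Kx x_argmin y.
case Ky: (K y) => [ky| |] => [|_|]; [| by rewrite leey | by have := K_gtNy y; rewrite Ky].
have -> : a + alpha *: x = (a + alpha *: projMperp M x) + alpha *: projM M x.
  by rewrite -addrA -scalerDr add_projMperp_projM.
rewrite Kx -!EFinD !lee_fin !enorm_sq !(dotpDr _ _ (alpha *: projM M x)) !dotpZr.
rewrite (dotp_projMr M x) (dotp_projMr M y).
have := mulr_ge0 alpha_ge0 (dotp_ge0 (projM M y - projM M x)).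
rewrite !(dotpBl, dotpBr) (dotpC (projM M x)).
nra.
Qed.

End ProximalStep.

Lemma bounded_seq_cluster (R : realType) d (u : nat -> 'rV[R]_d) (B : R) :
  (forall k, (1 <= k)%N -> enorm (u k) <= B) ->
  exists l : 'rV[R]_d,
    forall (A : set 'rV[R]_d) N, nbhs l A -> exists2 n, (N <= n)%N & A (u n).
Proof.
move=> u_bounded.
pose ball0 := closed_ball_ (@Num.norm _ _) (0 : 'rV[R]_d) B.
have ball0_compact : compact ball0.
  apply: bounded_closed_compact; last exact: closed_closed_ball_.
  exists B; split; first by rewrite num_real.
  move=> C BC v; rewrite /ball0 /closed_ball_ /= sub0r normrN => vB.
  exact: le_trans vB (ltW BC).
have : (u @ \oo) ball0.
  exists 1%N => // n /= n1; rewrite /ball0 /closed_ball_ /= sub0r normrN.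
  exact: le_trans (normr_le_enorm _) (u_bounded n n1).
case/ball0_compact => l [_ l_cluster]; exists l => A N lA.
have u_tail : (u @ \oo) (u @` [set n | (N <= n)%N]) by exists N => // n Nn; exists n.
by have [_ [[n Nn <-] An]] := l_cluster _ A u_tail lA; exists n.
Qed.

(* Once S N is within e / 4 of sup S and n >= 2 N, monotonicity gives
   (n + 1) f n <= 2 (n + 1 - N) f n <= 2 (S (n + 1) - S N) < e / 2. *)
Lemma summable_nonincreasing_mulr_cvg0 (R : realType) (f : nat -> R) (C : R) :
  (forall n, 0 <= f n) -> (forall n, f n.+1 <= f n) ->
  (forall n, \sum_(0 <= k < n) f k <= C) ->
  (fun n => n.+1%:R * f n) @ \oo --> 0.
Proof.
move=> f_ge0 f_nonincr sum_bounded.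
have f_le m n : (m <= n)%N -> f n <= f m.
  exact: (nonincreasing_seqP f).1 f_nonincr m n.
pose S n := \sum_(0 <= k < n) f k.
have S_sup : has_sup (range S).
  by split; [exists (S 0%N), 0%N | exists C => _ [n _ <-]; exact: sum_bounded].
apply/cvgrPdist_lt => e e0.
have [_ [N _ <-] SN] := sup_adherent (divr_gt0 e0 (ltr0n _ 4)) S_sup.
near=> n.
have Nn : (2 * N <= n)%N by near: n; apply: nbhs_infty_ge.
rewrite sub0r normrN ger0_norm ?mulr_ge0 //.
have Sn_le : S n.+1 <= sup (range S) by apply: sup_upper_bound => //; exists n.+1.
have S_split : S n.+1 = S N + \sum_(N <= k < n.+1) f k.
  by rewrite /S (big_cat_nat _ (m := 0%N) (n := N)) //; lia.
have tail_ge : (n.+1 - N)%:R * f n <= \sum_(N <= k < n.+1) f k.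
  rewrite mulr_natl -sumr_const_nat big_nat [leRHS]big_nat.
  by apply: ler_sum => k /andP[_ kn]; apply: f_le; rewrite -ltnS.
have : n.+1%:R <= 2 * (n.+1 - N)%:R :> R by rewrite -natrM ler_nat; lia.
have := f_ge0 n; nra.
Unshelve. all: by end_near.
Qed.

Section AugmentedDualAscent.
Variables (R : realType) (d : nat) (M : 'M[R]_d) (alpha : R).
Variables (K : 'rV[R]_d -> \bar R) (x Lam : nat -> 'rV[R]_d).
Hypotheses (alpha_gt0 : 0 < alpha) (K_convex : convex_fun K).
Hypothesis K_gtNy : forall y, (-oo < K y)%E.
Hypothesis K_finite_somewhere : exists y, (K y < +oo)%E.
Hypothesis Lam0 : Lam 0%N = 0.
Hypothesis x_argmin : forall k y,
  (K (x k.+1) + (dotp (x k.+1) (Lam k) + alpha / 2 * enorm (x k.+1) ^+ 2)%:E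
   <= K y + (dotp y (Lam k) + alpha / 2 * enorm y ^+ 2)%:E)%E.
Hypothesis Lam_step : forall k, Lam k.+1 = Lam k + alpha *: projMperp M (x k.+1).

Local Notation P := (projMperp M).
Local Notation Q := (projM M).

Definition aug_fun y := (K y + (alpha / 2 * enorm (Q y) ^+ 2)%:E)%E.

Definition dual_fun L :=
  ereal_inf [set (aug_fun y + (dotp y (P L))%:E)%E | y in [set: 'rV[R]_d]].

(* x 0 is unconstrained: only lagr_iter k.+1 is meaningful. *)
Definition lagr_iter k :=
  fine (K (x k)) + alpha / 2 * enorm (Q (x k)) ^+ 2 + dotp (x k) (Lam k).

Lemma Lam_Mperp k : P (Lam k) = Lam k.
Proof.
elim: k => [|k IHk]; first by rewrite Lam0 projMperp0.
by rewrite Lam_step projMperpD projMperpZ projMperp_id IHk.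
Qed.

Lemma K_iter_fin_num k : K (x k.+1) \is a fin_num.
Proof.
have [y0 Ky0] := K_finite_somewhere.
have := x_argmin k y0; have := K_gtNy (x k.+1); have := K_gtNy y0.
move: Ky0; rewrite fin_numE; case: (K y0) => [ky0| |] //= _ _.
by case: (K (x k.+1)).
Qed.

Lemma aug_fun_iter k : aug_fun (x k.+1) =
  (fine (K (x k.+1)) + alpha / 2 * enorm (Q (x k.+1)) ^+ 2)%:E.
Proof. by rewrite /aug_fun -{1}(fineK (K_iter_fin_num k)). Qed.

Lemma lagr_iter_min k y : ((lagr_iter k.+1)%:E <= aug_fun y + (dotp y (Lam k.+1))%:E)%E.
Proof.
have Kx := esym (fineK (K_iter_fin_num k)).
have := prox_argmin_augmented (ltW alpha_gt0) K_convex K_gtNy M Kx (x_argmin k) y.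
by rewrite -Lam_step {1}Kx -!EFinD.
Qed.

Lemma dual_fun_Lam k : dual_fun (Lam k.+1) = (lagr_iter k.+1)%:E.
Proof.
apply/eqP; rewrite eq_le; apply/andP; split.
- apply: ereal_inf_lbound; exists (x k.+1) => //.
  by rewrite Lam_Mperp aug_fun_iter -EFinD.
- by apply: le_ereal_inf_tmp => _ [y _ <-]; rewrite Lam_Mperp; exact: lagr_iter_min.
Qed.

Lemma dual_fun_supergrad L k : (dual_fun L <=
  (lagr_iter k.+1 + alpha^-1 * dotp (Lam k.+1 - Lam k) (P L - Lam k.+1))%:E)%E.
Proof.
apply: le_trans (_ : aug_fun (x k.+1) + (dotp (x k.+1) (P L))%:E <= _)%E.
  by apply: ereal_inf_lbound; exists (x k.+1).
rewrite aug_fun_iter -EFinD lee_fin.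
have -> : Lam k.+1 - Lam k = alpha *: P (x k.+1) by rewrite Lam_step addrC addKr.
rewrite dotpZl mulKf ?gt_eqF //.
rewrite dotpBr -dotp_projMperpr -dotp_projMperp_sym Lam_Mperp /lagr_iter.
lra.
Qed.

Lemma lagr_iter_nondecr : {homo (fun k => lagr_iter k.+1) : m n / (m <= n)%N >-> m <= n}.
Proof.
apply/nondecreasing_seqP => k /=.
have := dual_fun_supergrad (Lam k.+1) k.+1; rewrite dual_fun_Lam Lam_Mperp lee_fin.
rewrite -[Lam k.+1 - Lam k.+2]opprB dotpNr.
have alpha_inv_ge0 : 0 <= alpha^-1 by rewrite invr_ge0 ltW.
have := mulr_ge0 alpha_inv_ge0 (dotp_ge0 (Lam k.+2 - Lam k.+1)).
lra.
Qed.

Lemma dual_fun_lt_pinfty L : (dual_fun L < +oo)%E.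
Proof. exact: le_lt_trans (dual_fun_supergrad L 0) (ltry _). Qed.

Lemma dist_Lam_step L (hL : R) k : dual_fun L = hL%:E ->
  dotp (Lam k.+1 - P L) (Lam k.+1 - P L) + 2 * alpha * (hL - lagr_iter k.+1)
  <= dotp (Lam k - P L) (Lam k - P L).
Proof.
move=> hLE; have := dual_fun_supergrad L k; rewrite hLE lee_fin.
have -> : Lam k - P L = (Lam k.+1 - P L) - (Lam k.+1 - Lam k).
  by rewrite opprB [RHS]addrC [RHS]addrA subrK.
rewrite -(opprB (Lam k.+1)) dotpNr.
move: (Lam k.+1 - P L) (Lam k.+1 - Lam k) => w D supergrad.
have := ler_wpM2l (ltW alpha_gt0) supergrad.
rewrite mulrDr mulrA mulfV ?gt_eqF // mul1r.
have := dotp_ge0 D; rewrite !(dotpBl, dotpBr) (dotpC w D).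
nra.
Qed.

Lemma dist_Lam_sum L (hL : R) n : dual_fun L = hL%:E ->
  dotp (Lam n - P L) (Lam n - P L) + 2 * alpha * \sum_(0 <= k < n) (hL - lagr_iter k.+1)
  <= dotp (P L) (P L).
Proof.
move=> hLE; elim: n => [|n IHn].
  by rewrite Lam0 sub0r dotpNl dotpNr opprK big_geq // mulr0 addr0.
rewrite big_nat_recr //=; have := dist_Lam_step n hLE.
lra.
Qed.

Lemma dual_fun_le_rate L n :
  (dual_fun L <= (lagr_iter n.+1 + dotp (P L) (P L) / (2 * alpha * n.+1%:R))%:E)%E.
Proof.
case hLE: (dual_fun L) => [hL| |]; last 2 first.
- by have := dual_fun_lt_pinfty L; rewrite hLE.
- by rewrite leNye.
have sum_ge : \sum_(0 <= k < n.+1) (hL - lagr_iter n.+1)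
    <= \sum_(0 <= k < n.+1) (hL - lagr_iter k.+1).
  rewrite big_nat [leRHS]big_nat; apply: ler_sum => k /andP[_ kn].
  by rewrite lerD2l lerN2; exact: lagr_iter_nondecr.
rewrite sumr_const_nat subn0 -mulr_natl in sum_ge.
have two_alpha_ge0 : 0 <= 2 * alpha by rewrite mulr_ge0 ?ltW.
have := ler_wpM2l two_alpha_ge0 sum_ge.
have := dist_Lam_sum n.+1 hLE; have := dotp_ge0 (Lam n.+1 - P L).
rewrite lee_fin -lerBlDl ler_pdivlMr ?mulr_gt0 //.
nra.
Qed.

Lemma dual_fun_has_max (B : R) : (forall k, (1 <= k)%N -> enorm (Lam k) <= B) ->
  exists Ls, forall L, (dual_fun L <= dual_fun Ls)%E.
Proof.
move=> /bounded_seq_cluster[Ls Ls_cluster]; exists Ls => L.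
apply: le_ereal_inf_tmp => _ [y _ <-].
case hLE: (dual_fun L) => [hL| |]; last 2 first.
- by have := dual_fun_lt_pinfty L; rewrite hLE.
- by rewrite leNye.
case Jy: (aug_fun y) => [jy| |]; last 2 first.
- by rewrite leey.
- by move: Jy; rewrite /aug_fun; have := K_gtNy y; case: (K y).
rewrite -EFinD lee_fin dotp_projMperp_sym; apply/ler_addgt0Pr => e e_gt0.
have {e e_gt0}[e2 e2_gt0 ->] : exists2 e2 : R, 0 < e2 & e = e2 + e2.
  by exists (e / 2); rewrite ?divr_gt0 -?splitr.
pose C := dotp (P L) (P L); pose N := Num.bound (C / (alpha * e2)).
have Ls_nbhs : nbhs Ls [set v | dotp (P y) v < dotp (P y) Ls + e2].
  have /cvgrPdist_lt /(_ e2 e2_gt0) := @dotp_continuous _ _ (P y) Ls.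
  by apply: filterS => v; rewrite ltr_distlC => /andP[].
have [[//|n] Nn /= near_Ls] := Ls_cluster _ N.+1 Ls_nbhs.
pose q := C / (2 * alpha * n.+1%:R).
have q_lt : q < e2.
  have : C / (alpha * e2) < n.+1%:R.
    apply: lt_le_trans (archi_boundP _) _; first by rewrite divr_ge0 ?dotp_ge0 ?mulr_ge0 ?ltW.
    by rewrite ler_nat ltnW.
  rewrite !ltr_pdivrMr ?mulr_gt0 //.
  have : 0 < n.+1%:R * (alpha * e2) by rewrite !mulr_gt0.
  nra.
have rate : hL <= lagr_iter n.+1 + q by rewrite -lee_fin -hLE; exact: dual_fun_le_rate.
have iter_min : lagr_iter n.+1 <= jy + dotp (P y) (Lam n.+1).
  by have := lagr_iter_min n y; rewrite Jy -EFinD lee_fin -dotp_projMperp_sym Lam_Mperp.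
lra.
Qed.

Lemma dual_max_finite L : (forall L', (dual_fun L' <= dual_fun L)%E) ->
  exists hL : R, dual_fun L = hL%:E.
Proof.
move=> L_max; exists (fine (dual_fun L)); rewrite fineK // fin_numE -ltNye -ltey.
rewrite dual_fun_lt_pinfty andbT; apply: lt_le_trans (L_max (Lam 1%N)).
by rewrite dual_fun_Lam ltNyr.
Qed.

Lemma Lam_fejer L : (forall L', (dual_fun L' <= dual_fun L)%E) ->
  forall k, enorm (Lam k.+1 - L) <= enorm (Lam k - L).
Proof.
move=> L_max k; have [hL hLE] := dual_max_finite L_max.
have gap_ge0 : 0 <= 2 * alpha * (hL - lagr_iter k.+1).
  apply: mulr_ge0; first by rewrite mulr_ge0 ?ltW.
  by rewrite subr_ge0 -lee_fin -hLE -dual_fun_Lam.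
have := dist_Lam_step k hLE.
rewrite ler_enorm (dotp_sub_projMperp L (Lam_Mperp k)).
rewrite (dotp_sub_projMperp L (Lam_Mperp k.+1)).
lra.
Qed.

Lemma dual_gap_rate Ls : (forall L, (dual_fun L <= dual_fun Ls)%E) ->
  (fun k => k%:R%:E * (ereal_sup (range dual_fun) - dual_fun (Lam k)))%E @ \oo --> 0%E.
Proof.
move=> Ls_max; have [hs hsE] := dual_max_finite Ls_max.
have -> : ereal_sup (range dual_fun) = hs%:E.
  rewrite -hsE; apply/eqP; rewrite eq_le ereal_sup_ubound ?andbT; last by exists Ls.
  by apply: ge_ereal_sup => _ [L _ <-].
have gap_ge0 n : 0 <= hs - lagr_iter n.+1.
  by rewrite subr_ge0 -lee_fin -hsE -dual_fun_Lam.
have gap_nonincr n : hs - lagr_iter n.+2 <= hs - lagr_iter n.+1.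
  by rewrite lerD2l lerN2; exact: lagr_iter_nondecr.
have gap_sum n : \sum_(0 <= k < n) (hs - lagr_iter k.+1) <= dotp (P Ls) (P Ls) / (2 * alpha).
  rewrite ler_pdivlMr ?mulr_gt0 // mulrC.
  by have := dist_Lam_sum n hsE; have := dotp_ge0 (Lam n - P Ls); lra.
apply: cvg_EFin.
  by exists 1%N => // -[|k] //= _; rewrite dual_fun_Lam -EFinB -EFinM.
rewrite -cvg_shiftS.
have -> : [sequence (fine \o (fun k => k%:R%:E * (hs%:E - dual_fun (Lam k)))%E) n.+1]_n
    = fun n => n.+1%:R * (hs - lagr_iter n.+1).
  by apply: funext => n /=; rewrite dual_fun_Lam -EFinB -EFinM.
exact: summable_nonincreasing_mulr_cvg0 gap_ge0 gap_nonincr gap_sum.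
Qed.

End AugmentedDualAscent.

Unset Implicit Arguments.

Theorem corollary2 (R : realType) (d : nat) (M : 'M[R]_d) (alpha : R)
  (K : 'rV[R]_d -> \bar R) (x Lam : nat -> 'rV[R]_d) :
  0 < alpha ->
  feasible K -> convex_fun K ->
  Lam 0%N = 0 ->
  (forall k : nat, forall y : 'rV[R]_d,
     (K (x k.+1) + (dotp (x k.+1) (Lam k) + alpha / 2 * enorm (x k.+1) ^+ 2)%:E
      <= K y + (dotp y (Lam k) + alpha / 2 * enorm y ^+ 2)%:E)%E) ->
  (forall k : nat, Lam k.+1 = Lam k + alpha *: projMperp M (x k.+1)) ->
  let J := fun y : 'rV[R]_d =>
    (K y + (alpha / 2 * enorm (projM M y) ^+ 2)%:E)%E in
  let h := fun L : 'rV[R]_d =>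
    ereal_inf [set (J y + (dotp y (projMperp M L))%:E)%E | y in [set: 'rV[R]_d]] in
  (exists B : R, forall k : nat, (1 <= k)%N -> enorm (Lam k) <= B) ->
  let S := [set L : 'rV[R]_d | forall L' : 'rV[R]_d, (h L' <= h L)%E] in
  let c := ereal_sup (range h) in
  [/\ S !=set0,
      (forall L, S L -> forall k : nat, (1 <= k)%N ->
         enorm (Lam k.+1 - L) <= enorm (Lam k - L))
    & (fun k : nat => (k%:R)%:E * (c - h (Lam k)))%E @ \oo --> 0%E].
Proof.
move=> alpha_gt0 [_ [[K_finite K_gtNy] _]] K_convex Lam0 x_argmin Lam_step J h.
move=> [B Lam_bounded] S c.
have [Ls Ls_max] := dual_fun_has_max alpha_gt0 K_convex K_gtNy K_finite Lam0 x_argmin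
  Lam_step Lam_bounded.
split.
- by exists Ls.
- by move=> L L_max k _; exact: (Lam_fejer alpha_gt0 K_convex K_gtNy K_finite Lam0
    x_argmin Lam_step L_max).
- exact: (dual_gap_rate alpha_gt0 K_convex K_gtNy K_finite Lam0 x_argmin Lam_step Ls_max).
Qed.
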